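(* Let $r,s\in\widetilde{\mathbb{K}}_{sm}$ with $r\neq0$, $s\neq0$ and $rs=0$. Then there exists a characteristic set $S\subseteq I$ such that $r|_S=0$ and $s|_S=0$.
   Context: Let $I=(0,1]$ and $\mathbb{K}\in\{\mathbb{R},\mathbb{C}\}$. $\widetilde{\mathbb{K}}_{sm}=\mathcal{E}_{M,sm}/\mathcal{N}_{sm}$ where $\mathcal{E}_{M,sm}$ is the set of nets $(r_\varepsilon)_{\varepsilon\in I}\in\mathbb{K}^I$ smooth in $\varepsilon$ with $|r_\varepsilon|=O(\varepsilon^{-N})$ as $\varepsilon\to0$ for some $N$, and $\mathcal{N}_{sm}$ those with $|r_\varepsilon|=O(\varepsilon^m)$ for all $m$. A subset $S\subseteq I$ is a characteristic set if $0\in\overline{S}$. For $r\in\widetilde{\mathbb{K}}_{sm}$ and a characteristic set $S$, $r|_S=0$ means: for a (equivalently, any) representative $(r_\varepsilon)_\varepsilon$ and every $m\in\mathbb{N}$ there is $\varepsilon_0>0$ with $|r_\varepsilon|<\varepsilon^m$ for all $\varepsilon\in S$ with $\varepsilon<\varepsilon_0$. *)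

From Stdlib Require Import Reals Lra.
From Coquelicot Require Import Coquelicot.
Open Scope R_scope.

Definition inI (e : R) : Prop := 0 < e <= 1.

Definition smooth_on_I (f : R -> R) : Prop :=
  exists (g : R -> R) (d : R), 0 < d /\
    (forall e, inI e -> g e = f e) /\
    (forall (n : nat) (x : R), 0 < x < 1 + d -> ex_derive_n g n x).

(* Growth conditions, stated on the absolute value a e = |r_e| of a net. *)
Definition moderate_abs (a : R -> R) : Prop :=
  exists (N : nat) (C e0 : R), 0 < e0 /\
    forall e, inI e -> e < e0 -> a e <= C / e ^ N.

Definition negligible_abs (a : R -> R) : Prop :=
  forall m : nat, exists (C e0 : R), 0 < e0 /\
    forall e, inI e -> e < e0 -> a e <= C * e ^ m.

Definition EMsmR (r : R -> R) : Prop :=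
  smooth_on_I r /\ moderate_abs (fun e => Rabs (r e)).
Definition NsmR (r : R -> R) : Prop := negligible_abs (fun e => Rabs (r e)).

Definition EMsmC (r : R -> C) : Prop :=
  smooth_on_I (fun e => Re (r e)) /\ smooth_on_I (fun e => Im (r e)) /\
  moderate_abs (fun e => Cmod (r e)).
Definition NsmC (r : R -> C) : Prop := negligible_abs (fun e => Cmod (r e)).

Definition char_set (S : R -> Prop) : Prop :=
  (forall e, S e -> inI e) /\
  (forall d, 0 < d -> exists e, S e /\ e < d).

(* r|_S = 0, stated on |r_e| for a representative *)
Definition restr_zero_abs (a : R -> R) (S : R -> Prop) : Prop :=
  forall m : nat, exists e0, 0 < e0 /\
    forall e, S e -> e < e0 -> a e < e ^ m.

(** Put [A = |r|], [B = |s|] and take for [S] the points of [I] where [A = B].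
    Since [AB] is negligible while [A] is not, [B < A] at points arbitrarily
    close to [0] (otherwise [A^2 <= AB] would make [A] negligible); likewise
    [A < B], so by continuity [A = B] at points arbitrarily close to [0], i.e.
    [S] is characteristic.  On [S] we have [A^2 = B^2 = AB], so both [A] and
    [B] are negligible along [S]. *)

From Stdlib Require Import Reals Ranalysis5.
From Coquelicot Require Import Coquelicot.
From Stdlib Require Import Lra Psatz Classical.
Open Scope R_scope.

Definition negligible_on (S : R -> Prop) (a : R -> R) : Prop :=
  forall m : nat, exists (C e0 : R), 0 < e0 /\
    forall e, S e -> e < e0 -> a e <= C * e ^ m.

(* [negligible_abs] is [negligible_on inI] by conversion.  Continuity is only
   required of some function agreeing with [f] on [I]. *)
Definition cont_on_I (f : R -> R) : Prop :=
  exists g : R -> R, (forall e, inI e -> g e = f e) /\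
    forall x, inI x -> continuity_pt g x.

Lemma negligible_on_le (S T : R -> Prop) (a b : R -> R) :
  (forall e, S e -> T e) -> (forall e, S e -> a e <= b e) ->
  negligible_on T b -> negligible_on S a.
Proof.
  intros ST ab Nb m; destruct (Nb m) as [C [e0 [He0 Hb]]].
  exists C, e0; split; [exact He0|].
  intros e Se He; apply (Rle_trans _ (b e)); auto.
Qed.

Lemma negligible_on_sqrt (S : R -> Prop) (a : R -> R) :
  (forall e, S e -> 0 <= e) -> (forall e, S e -> 0 <= a e) ->
  negligible_on S (fun e => a e * a e) -> negligible_on S a.
Proof.
  intros Spos apos N m; destruct (N (m + m)%nat) as [C [e0 [He0 H]]].
  exists (sqrt (Rabs C)), e0; split; [exact He0|].
  intros e Se He; specialize (H e Se He); rewrite pow_add in H.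
  assert (P : 0 <= e ^ m) by (apply pow_le; auto).
  assert (K : sqrt (Rabs C) * sqrt (Rabs C) = Rabs C)
    by (apply sqrt_sqrt, Rabs_pos).
  pose proof (sqrt_pos (Rabs C)); pose proof (Rle_abs C); pose proof (apos e Se).
  apply Rsqr_incr_0_var; [unfold Rsqr; nra | now apply Rmult_le_pos].
Qed.

Lemma negligible_near_zero (d : R) (a : R -> R) : 0 < d ->
  negligible_on (fun e => inI e /\ e < d) a -> negligible_abs a.
Proof.
  intros Hd N m; destruct (N m) as [C [e0 [He0 H]]].
  exists C, (Rmin e0 d); split; [now apply Rmin_pos|].
  intros e Ie He; apply H.
  - split; [exact Ie | exact (Rlt_le_trans _ _ _ He (Rmin_r _ _))].
  - exact (Rlt_le_trans _ _ _ He (Rmin_l _ _)).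
Qed.

(* Absorb the constant: [C e^(m+1) < e^m] once [(|C| + 1) e < 1]. *)
Lemma restr_zero_of_negligible_on (S : R -> Prop) (a : R -> R) :
  (forall e, S e -> 0 < e) -> negligible_on S a -> restr_zero_abs a S.
Proof.
  intros Spos N m; destruct (N (Datatypes.S m)) as [C [e0 [He0 H]]].
  pose proof (Rabs_pos C); pose proof (Rle_abs C).
  assert (HC : 0 < / (Rabs C + 1)) by (apply Rinv_0_lt_compat; lra).
  exists (Rmin e0 (/ (Rabs C + 1))); split; [now apply Rmin_pos|].
  intros e Se He; specialize (Spos e Se).
  specialize (H e Se (Rlt_le_trans _ _ _ He (Rmin_l _ _))); simpl in H.
  assert (Ce : (Rabs C + 1) * e < 1).
  { rewrite <- (Rinv_r (Rabs C + 1)) at 2 by lra.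
    apply Rmult_lt_compat_l; [lra | exact (Rlt_le_trans _ _ _ He (Rmin_r _ _))]. }
  assert (P : 0 < e ^ m) by (apply pow_lt; exact Spos).
  assert (Ce1 : C * e < 1) by nra.
  apply (Rle_lt_trans _ _ _ H); rewrite <- Rmult_assoc.
  rewrite <- (Rmult_1_l (e ^ m)) at 2; now apply Rmult_lt_compat_r.
Qed.

Lemma restr_zero_of_coincidence (S : R -> Prop) (A B : R -> R) :
  (forall e, S e -> inI e /\ A e = B e) -> (forall e, 0 <= A e) ->
  negligible_abs (fun e => A e * B e) -> restr_zero_abs A S.
Proof.
  intros HS Apos N.
  apply restr_zero_of_negligible_on; [intros e Se; apply HS, Se|].
  apply negligible_on_sqrt; [intros e Se; destruct (HS e Se) as [[] _]; lra
                            | intros e _; apply Apos |].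
  apply (negligible_on_le _ inI _ (fun e => A e * B e)); [apply HS | | exact N].
  intros e Se; destruct (HS e Se) as [_ E]; rewrite <- E; lra.
Qed.

Lemma exists_lt_near_zero (A B : R -> R) :
  (forall e, 0 <= A e) -> ~ negligible_abs A ->
  negligible_abs (fun e => A e * B e) ->
  forall d, 0 < d -> exists a, inI a /\ a < d /\ B a < A a.
Proof.
  intros Apos nA N d Hd; apply NNPP; intros no_lt; apply nA.
  apply (negligible_near_zero d); [exact Hd|].
  apply negligible_on_sqrt; [intros e [[] _]; lra | intros e _; apply Apos |].
  apply (negligible_on_le _ inI _ (fun e => A e * B e));
    [now intros e [] | | exact N].
  intros e [Ie He]; apply Rmult_le_compat_l; [apply Apos|].
  apply Rnot_lt_le; intros Hlt; apply no_lt; now exists e.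
Qed.

Lemma IVT_on_I (f : R -> R) (a b : R) :
  cont_on_I f -> inI a -> inI b -> f a < 0 -> 0 < f b ->
  exists c, inI c /\ c <= Rmax a b /\ f c = 0.
Proof.
  intros [g [Eg Cg]] Ia Ib fa fb; rewrite <- Eg in fa, fb by assumption.
  assert (Cab : forall x y, inI x -> inI y -> forall z, x <= z <= y -> inI z).
  { intros x y [] [] z []; split; lra. }
  destruct (Rtotal_order a b) as [ab | [-> | ba]]; [| lra |].
  - destruct (IVT_interv g a b) as [c [Hc gc]]; auto.
    { intros x Hx; apply Cg, (Cab a b); auto. }
    exists c; rewrite <- Eg by (apply (Cab a b); auto).
    split; [apply (Cab a b); auto | split; [rewrite Rmax_right; lra | exact gc]].
  - destruct (IVT_interv (- g)%F b a) as [c [Hc gc]]; unfold opp_fct in *;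
      [intros x Hx; apply continuity_pt_opp, Cg, (Cab b a); auto | auto | lra | lra |].
    exists c; rewrite <- Eg by (apply (Cab b a); auto).
    split; [apply (Cab b a); auto | split; [rewrite Rmax_left; lra | lra]].
Qed.

Lemma smooth_cont_on_I (f : R -> R) : smooth_on_I f -> cont_on_I f.
Proof.
  intros [g [d [Hd [Eg Dg]]]]; exists g; split; [exact Eg|].
  intros x [? ?]; apply continuity_pt_filterlim, (ex_derive_continuous g x).
  apply (Dg 1%nat); lra.
Qed.

Lemma cont_on_I_minus (f h : R -> R) :
  cont_on_I f -> cont_on_I h -> cont_on_I (fun e => f e - h e).
Proof.
  intros [g [Eg Cg]] [k [Ek Ck]]; exists (g - k)%F; split.
  - intros e Ie; unfold minus_fct; rewrite Eg, Ek; auto.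
  - intros x Ix; apply continuity_pt_minus; auto.
Qed.

Lemma cont_on_I_abs (f : R -> R) :
  cont_on_I f -> cont_on_I (fun e => Rabs (f e)).
Proof.
  intros [g [Eg Cg]]; exists (comp Rabs g); split.
  - intros e Ie; unfold comp; rewrite Eg; auto.
  - intros x Ix; apply continuity_pt_comp; [auto | apply Rcontinuity_abs].
Qed.

Lemma cont_on_I_Cmod (r : R -> C) :
  cont_on_I (fun e => Re (r e)) -> cont_on_I (fun e => Im (r e)) ->
  cont_on_I (fun e => Cmod (r e)).
Proof.
  intros [g [Eg Cg]] [h [Eh Ch]].
  exists (comp sqrt (fun e => g e ^ 2 + h e ^ 2)); split.
  - intros e Ie; unfold comp, Cmod; rewrite Eg, Eh; auto.
  - intros x Ix; apply continuity_pt_comp.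
    + apply continuity_pt_plus; simpl;
        repeat apply continuity_pt_mult; auto; apply continuity_pt_const; now intros ? ?.
    + apply continuity_pt_sqrt; nra.
Qed.

Lemma zero_divisor_restr_zero (A B : R -> R) :
  cont_on_I A -> cont_on_I B -> (forall e, 0 <= A e) -> (forall e, 0 <= B e) ->
  ~ negligible_abs A -> ~ negligible_abs B ->
  negligible_abs (fun e => A e * B e) ->
  exists S : R -> Prop, char_set S /\ restr_zero_abs A S /\ restr_zero_abs B S.
Proof.
  intros cA cB Apos Bpos nA nB NAB.
  assert (NBA : negligible_abs (fun e => B e * A e)).
  { apply (negligible_on_le _ inI _ (fun e => A e * B e)); auto.
    intros e _; rewrite Rmult_comm; lra. }
  exists (fun e => inI e /\ A e = B e); split; [split|split].
  - now intros e [].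
  - intros d Hd.
    destruct (exists_lt_near_zero A B Apos nA NAB d Hd) as [a [Ia [ad Ha]]].
    destruct (exists_lt_near_zero B A Bpos nB NBA d Hd) as [b [Ib [bd Hb]]].
    destruct (IVT_on_I (fun e => B e - A e) a b) as [c [Ic [cab Hc]]];
      [now apply cont_on_I_minus | auto | auto | lra | lra |].
    exists c; split; [split; [exact Ic | lra] |].
    apply (Rle_lt_trans _ _ _ cab), Rmax_lub_lt; assumption.
  - apply (restr_zero_of_coincidence _ A B); auto.
  - apply (restr_zero_of_coincidence _ B A); auto.
    now intros e [Ie E].
Qed.

Theorem lemma4p17 :
  (forall r s : R -> R,
      EMsmR r -> EMsmR s ->
      ~ NsmR r -> ~ NsmR s ->
      NsmR (fun e => r e * s e) ->
      exists S : R -> Prop, char_set S /\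
        restr_zero_abs (fun e => Rabs (r e)) S /\
        restr_zero_abs (fun e => Rabs (s e)) S)
  /\
  (forall r s : R -> C,
      EMsmC r -> EMsmC s ->
      ~ NsmC r -> ~ NsmC s ->
      NsmC (fun e => Cmult (r e) (s e)) ->
      exists S : R -> Prop, char_set S /\
        restr_zero_abs (fun e => Cmod (r e)) S /\
        restr_zero_abs (fun e => Cmod (s e)) S).
Proof.
  split.
  - intros r s [sr _] [ss _] nr ns N.
    apply zero_divisor_restr_zero; auto using smooth_cont_on_I, cont_on_I_abs, Rabs_pos.
    apply (negligible_on_le _ inI _ (fun e => Rabs (r e * s e))); auto.
    intros e _; rewrite Rabs_mult; lra.
  - intros r s [sr1 [sr2 _]] [ss1 [ss2 _]] nr ns N.
    apply zero_divisor_restr_zero; auto using smooth_cont_on_I, cont_on_I_Cmod, Cmod_ge_0.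
    apply (negligible_on_le _ inI _ (fun e => Cmod (r e * s e))); auto.
    intros e _; rewrite Cmod_mult; lra.
Qed.
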